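(* There is a sign $\epsilon = \pm 1$ such that the family $\epsilon\tilde{\alpha}_0 h', \dots, \epsilon\tilde{\alpha}_r h'$ is a uniform positive dual family to $\underline{a} = (au_0, \dots, au_r)$ in $L$. Therefore there exists a positive integer $l$ such that for all $0 \leq j \leq r$, $au_j(\epsilon\tilde{\alpha}_j h') = lt$ and $au_k(\epsilon\tilde{\alpha}_j h') = 0$ for $k \neq j$ (i.e. $\underline{a} \cdot (\epsilon\tilde{\underline{\alpha}} h') = lt I_{r+1}$). The value of $l$ is given by the following equality, which holds in $\mathbb{Z}$: $$\epsilon \lambda l t = \frac{\mathcal{N}(h')}{\mathcal{N}(L)} \tilde{\lambda} \tilde{t}.$$
   Context: Let $\mathbb{K}$ be a number field of degree $d = r+2 \geq 2$ with exactly one pair of complex embeddings, with embeddings ordered $\sigma_1, \dots, \sigma_r$ (real), $\sigma_{r+1}$ (complex) and $\sigma_{r+2} = \overline{\sigma_{r+1}}$. A $\mathbb{Q}$-basis $(e_1, \dots, e_d)$ of $\mathbb{K}$ is called positive if $i\cdot\det((\sigma_j(e_k))_{1 \leq j,k\leq d}) > 0$. Let $\mathfrak{f} \neq \mathcal{O}_{\mathbb{K}}$ be an integral ideal, $q\mathbb{Z} = \mathfrak{f} \cap \mathbb{Z}$, $\mathfrak{b}$ an integral ideal coprime to $\mathfrak{f}$, $L = \mathfrak{f}\mathfrak{b}^{-1}$, and $\mathfrak{a}$ an integral ideal coprime to $\mathfrak{f}\mathfrak{b}$ of norm $N$ with $\mathfrak{a}^{-1}L/L$ cyclic. Let $h \in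 L$ be admissible, i.e. $h/q \equiv 1 \bmod L$ and $h/N$ generates $\mathfrak{a}^{-1}L/L$. Write $h = mh'$ with $m$ a positive integer and $h'$ primitive in $L$. Let $u_1, \dots, u_r$ be totally positive units congruent to $1$ mod $\mathfrak{f}$ (obtained from a system of fundamental units of this group) such that $1, u_1, \dots, u_r$ are linearly independent; put $u_0 = 1$. Choose a positive $\mathbb{Z}$-basis $B_L = (e_0 = h', e_1, \dots, e_{r+1})$ of $L$ with $u_jh' = \sum_{k=0}^j c_{jk0}e_k$, $c_{jk0} \in \mathbb{Z}$, $c_{jj0} > 0$. Put $\lambda = \prod_{j=1}^r c_{jj0}$ and let $a \in \mathrm{Hom}_{\mathbb{Z}}(L, \mathbb{Z})$ be defined by $\lambda a = \det_{B_L}(h', u_1h', \dots, u_rh', \cdot)$; write $au_j$ for the linear form $x \mapsto a(u_jx)$. Let $\mathcal{A}$ be the square matrix of size $r+1$ of the coefficients of $au_0, \dots, au_r$ on the last $r+1$ vectors of the dual basis of $B_L$ (the first coefficients are all $0$), with Smith elementary divisors $[A_r, \dots, A_1, 1]$ ($A_i | A_{i+1}$), and put $t = A_r$. A positive dual family to $\underline{a}$ in $L$ is a family $\alpha_0, \dots, \alpha_r \in L$ with $au_j(\alpha_j) > 0$ and $au_k(\alpha_j) = 0$ for $k \neq j$; it is uniform if $au_j(\alpha_j)$ is independent of $j$. It is known (previous lemma) that for any uniform positive dual family $\alpha'$ with $au_j(\alpha'_j) = n$, $t$ divides $n$. Similarly, choose a positive basis $B_{\mathbb{K}} = (1, \tilde{e}_1,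 \dots, \tilde{e}_{r+1})$ of $\mathcal{O}_{\mathbb{K}}$ with $u_j = \sum_{k=0}^j \tilde{c}_{jk0}\tilde{e}_k$, $\tilde{c}_{jj0} > 0$; put $\tilde{\lambda} = \prod_{j=1}^r \tilde{c}_{jj0}$ and define $\tilde{a}$ by $\tilde{\lambda}\tilde{a} = \det_{B_{\mathbb{K}}}(1, u_1, \dots, u_r, \cdot)$. Let $\tilde{\mathcal{A}}$ be the analogous square matrix for $(\tilde{a}, \tilde{a}u_1, \dots, \tilde{a}u_r)$, with elementary divisors $[\tilde{A}_r, \dots, \tilde{A}_1, 1]$, and put $\tilde{t} = \tilde{A}_r$. Let $\tilde{\alpha}_0, \dots, \tilde{\alpha}_r \in \mathcal{O}_{\mathbb{K}}$ be given by the columns of $(\prod_{i=1}^r \tilde{A}_i^{-1})\mathrm{com}(\tilde{\mathcal{A}})^T$, so that $\tilde{a}u_j(\tilde{\alpha}_j) = \tilde{t}$ and $\tilde{a}u_k(\tilde{\alpha}_j) = 0$ for $k \neq j$. Here $\mathcal{N}(h')$ is the norm of the element $h'$ and $\mathcal{N}(L)$ the norm of the fractional ideal $L$. *)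

(* Number field K = finite field extension of Q (fieldExtType rat),
   complex embeddings into algC (algebraic closure of Q inside C). *)
From HB Require Import structures.
From mathcomp Require Import all_boot all_order all_algebra all_field.
Set Implicit Arguments. Unset Strict Implicit. Unset Printing Implicit Defensive.
Import Order.TTheory GRing.Theory Num.Theory.
Local Open Scope ring_scope.

Section NF.
Variable K : fieldExtType rat.

Definition OK (x : K) : Prop :=
  exists p : {poly int}, p \is monic /\ root (map_poly (fun z : int => (z%:~R : K)) p) x.

Definition OKunit (u : K) : Prop := OK u /\ OK u^-1.

Definition qfree n (e : 'I_n -> K) : Prop :=
  forall c : 'I_n -> rat, \sum_i c i *: e i = 0 -> forall i, c i = 0.
Definition zspan n (e : 'I_n -> K) (x : K) : Prop :=
  exists z : 'I_n -> int, x = \sum_i e i *~ z i.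
Definition zbasis n (I : K -> Prop) (e : 'I_n -> K) : Prop :=
  qfree e /\ forall x, I x <-> zspan e x.

Definition OKmodule (I : K -> Prop) : Prop :=
  I 0 /\ (forall x y, I x -> I y -> I (x - y)) /\ (forall c x, OK c -> I x -> I (c * x)).
Definition frac_ideal (I : K -> Prop) : Prop :=
  OKmodule I /\ (exists x, I x /\ x != 0) /\
  exists c, c != 0 /\ OK c /\ forall x, I x -> OK (c * x).
Definition int_ideal (I : K -> Prop) : Prop := frac_ideal I /\ forall x, I x -> OK x.
Definition idealMul (I J : K -> Prop) (x : K) : Prop :=
  exists n (a b : 'I_n -> K), (forall i, I (a i)) /\ (forall i, J (b i)) /\ x = \sum_i a i * b i.
Definition idealInv (I : K -> Prop) (x : K) : Prop := forall y, I y -> OK (x * y).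
Definition ideal_coprime (I J : K -> Prop) : Prop := exists x y, I x /\ J y /\ x + y = 1.

Definition detB n (B : 'I_n -> K) (v : 'I_n -> K) : rat :=
  \det (\matrix_(j < n, k < n) coord [tuple B i | i < n] k (v j)).

Definition ideal_norm_is n (I : K -> Prop) (v : rat) : Prop :=
  exists (eK eI : 'I_n -> K), zbasis OK eK /\ zbasis I eI /\ v = `|detB eK eI|.

(* the quotient J/I of Z-modules is cyclic, generated by (the class of) g *)
Definition quot_generated_by (J I : K -> Prop) (g : K) : Prop :=
  J g /\ forall x, J x -> exists z : int, I (x - g *~ z).

(* the linear form a defined by  lam * a(x) = det_B(h, u_1 h, ..., u_r h, x) *)
Definition dualform r (B : 'I_r.+2 -> K) (u : 'I_r.+1 -> K) (h : K) (lam : rat) (x : K) : rat :=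
  detB B (fun j : 'I_r.+2 => if (j < r.+1)%N then u (inord j) * h else x) / lam.

Definition coefmx r (F : 'I_r.+1 -> K -> rat) (B : 'I_r.+2 -> K) : 'M[rat]_r.+1 :=
  \matrix_(j, k) F j (B (lift ord0 k)).

Definition positive_basis n (sigma : 'I_n -> {rmorphism K -> algC}) (e : 'I_n -> K) : Prop :=
  0 < 'i * \det (\matrix_(j < n, k < n) sigma j (e k)).

Definition elt_norm n (sigma : 'I_n -> {rmorphism K -> algC}) (x : K) : algC :=
  \prod_i sigma i x.

Definition pos_dual_family n (F : 'I_n -> K -> rat) (I : K -> Prop) (al : 'I_n -> K) : Prop :=
  (forall j, I (al j)) /\ (forall j, 0 < F j (al j)) /\ (forall j k, k != j -> F k (al j) = 0).
Definition uniform_family n (F : 'I_n -> K -> rat) (al : 'I_n -> K) : Prop :=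
  forall j k, F j (al j) = F k (al k).
End NF.

Definition smith_divisors n (M : 'M[rat]_n.+1) (A : 'I_n.+1 -> int) : Prop :=
  A ord0 = 1 /\ (forall i, 0 <= A i) /\
  (forall i : 'I_n, (A (widen_ord (leqnSn n) i) %| A (lift ord0 i))%Z) /\
  exists P Q : 'M[int]_n.+1, P \in unitmx /\ Q \in unitmx /\
    map_mx (fun z : int => (z%:~R : rat)) P *m M *m map_mx (fun z : int => (z%:~R : rat)) Q
    = diag_mx (\row_i ((A i)%:~R : rat)).

(* Write a(x) = det_{B_L}(h', u_1 h', ..., u_r h', x) / λ and
   ã(x) = det_{B_K}(1, u_1, ..., u_r, x) / λ̃.  After applying the embeddings,
   multiplying every argument by h' multiplies the determinant by N(h'), and passing
   from B_K to B_L divides it by det B_L / det B_K, which is N(L) because both bases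
   are positive.  Hence a u_k (x h') = N(h')/N(L) · λ̃/λ · ã u_k (x), so the α̃_j h'
   are dual to the a u_k with a common value s.  It is nonzero since t̃ ≠ 0: the ã u_k
   have no common zero on span(ẽ_1, ..., ẽ_(r+1)) but 0, as an irrational x with
   x u_k ∈ ker ã for all k would stabilise the hyperplane ker ã = span(u_0, ..., u_r).
   With ε the sign of s, writing the ε α̃_j h' in the basis B_L and using the Smith
   form of 𝒜 shows that t divides ε s. *)

From HB Require Import structures.
From mathcomp Require Import all_boot all_order all_algebra all_field.
From mathcomp Require Import ring.
Import Order.TTheory GRing.Theory Num.Theory.
Local Open Scope ring_scope.
Set Implicit Arguments. Unset Strict Implicit. Unset Printing Implicit Defensive.

Section Coordinates.
Variables (K : fieldExtType rat) (n : nat).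
Hypothesis dimK : \dim {:K} = n.
Implicit Types (B e v : 'I_n -> K).

Local Notation tup e := [tuple e i | i < n].

Lemma qfree_free e : qfree e -> free (tup e).
Proof.
by move=> free_e; apply/freeP => k; under eq_bigr do rewrite nth_mktuple; apply: free_e.
Qed.

Lemma qfree_neq0 e i : qfree e -> e i != 0.
Proof.
by move/qfree_free/free_not0; apply; rewrite -tnth_mktuple mem_tnth.
Qed.

Lemma coord_expand e x : qfree e -> x = \sum_i coord (tup e) i x *: e i.
Proof.
move=> free_e; have basis_e : basis_of fullv (tup e).
  by rewrite basisEfree qfree_free // subvf size_tuple dimK /=.
by rewrite {1}(coord_basis basis_e (memvf x)); under eq_bigr do rewrite nth_mktuple.
Qed.

Lemma detB_neq0 B v : qfree B -> qfree v -> detB B v != 0.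
Proof.
move=> free_B free_v; apply/negP => /det0P[c c_neq0 cC0]; case/eqP: c_neq0.
suff vdep : \sum_j c 0 j *: v j = 0.
  by apply/rowP => j; rewrite mxE; apply: (free_v (c 0) vdep).
under eq_bigr do rewrite (coord_expand (v _) free_B) scaler_sumr.
rewrite exchange_big big1 //= => l _.
under eq_bigr do rewrite scalerA; rewrite -scaler_suml.
suff -> : \sum_j c 0 j * coord (tup B) l (v j) = 0 by rewrite scale0r.
transitivity ((c *m \matrix_(j, k) coord (tup B) k (v j)) 0 l); last by rewrite cC0 mxE.
by rewrite mxE; apply: eq_bigr => j _; rewrite mxE.
Qed.

End Coordinates.

Lemma zbasis_mem (K : fieldExtType rat) n (I : K -> Prop) (e : 'I_n -> K) k :
  zbasis I e -> I (e k).
Proof.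
case=> _ spanI; apply/spanI; exists (fun i => (i == k)%:Z).
by rewrite (bigD1 k) //= eqxx big1 ?addr0 // => i /negbTE ->.
Qed.

Lemma zbasis_mulrz (K : fieldExtType rat) n (I : K -> Prop) (e : 'I_n -> K) x (z : int) :
  zbasis I e -> I x -> I (x *~ z).
Proof.
case=> _ spanI /spanI[w ->]; apply/spanI; exists (fun i => w i * z).
by rewrite mulrz_suml; apply: eq_bigr => i _; rewrite mulrzA.
Qed.

Lemma idealMul_mull (K : fieldExtType rat) (I J : K -> Prop) c x :
  OKmodule I -> OK c -> idealMul I J x -> idealMul I J (c * x).
Proof.
move=> [_ [_ I_mul]] OKc [m [a [b [Ia [Jb ->]]]]].
exists m, (fun i => c * a i), b; split=> [i|]; first exact: I_mul.
by split=> //; rewrite mulr_sumr; apply: eq_bigr => i _; rewrite mulrA.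
Qed.

Lemma divr_gt0_mulCi (x y : algC) : 0 < 'i * x -> 0 < 'i * y -> 0 < x / y.
Proof.
move=> ix_gt0 iy_gt0; suff -> : x / y = ('i * x) / ('i * y) by apply: divr_gt0.
by rewrite -mulf_div divff ?mul1r // neq0Ci.
Qed.

Section Embeddings.
Variables (K : fieldExtType rat) (n : nat).
Hypothesis dimK : \dim {:K} = n.
Variable sigma : 'I_n -> {rmorphism K -> algC}.
Implicit Types (B e v : 'I_n -> K).

Definition embmx v : 'M[algC]_n := \matrix_(j, k) sigma j (v k).

Lemma det_embmx_comb B v (C : 'M[rat]_n) : (forall k, v k = \sum_l C k l *: B l) ->
  \det (embmx v) = \det (embmx B) * ratr (\det C).
Proof.
move=> vE; have -> : embmx v = embmx B *m (map_mx ratr C)^T.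
  apply/matrixP => j k; rewrite !mxE vE rmorph_sum; apply: eq_bigr => l _.
  by rewrite -mulr_algl rmorphM alg_num_field fmorph_rat !mxE mulrC.
by rewrite det_mulmx det_tr det_map_mx.
Qed.

Lemma det_embmx_detB B v : qfree B -> \det (embmx v) = \det (embmx B) * ratr (detB B v).
Proof.
move=> free_B; apply: det_embmx_comb => k.
by rewrite {1}(coord_expand dimK (v k) free_B); apply: eq_bigr => l _; rewrite mxE.
Qed.

Lemma det_embmx_mull (x : K) v :
  \det (embmx (fun k => x * v k)) = elt_norm sigma x * \det (embmx v).
Proof.
have -> : embmx (fun k => x * v k) = diag_mx (\row_j sigma j x) *m embmx v.
  by apply/matrixP => j k; rewrite mul_diag_mx !mxE rmorphM.
by rewrite det_mulmx det_diag; congr (_ * _); apply: eq_bigr => i _; rewrite mxE.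
Qed.

Lemma elt_norm_neq0 (x : K) : x != 0 -> elt_norm sigma x != 0.
Proof. by move=> x_neq0; apply/prodf_neq0 => i _; rewrite fmorph_eq0. Qed.

Lemma det_embmx_zspan (I : K -> Prop) e e' : zbasis I e -> (forall k, I (e' k)) ->
  exists z : int, \det (embmx e') = \det (embmx e) * z%:~R.
Proof.
move=> [_ spanI] Ie'.
have /fin_all_exists[Z e'E] : forall k, exists z : 'I_n -> int, e' k = \sum_i e i *~ z i.
  by move=> k; apply/spanI.
pose Zmx := \matrix_(k, l) Z k l.
exists (\det Zmx); rewrite -ratr_int -det_map_mx.
apply: det_embmx_comb => k; rewrite e'E; apply: eq_bigr => l _.
by rewrite !mxE scaler_int.
Qed.

Lemma normr_det_embmx_zbasis (I : K -> Prop) e e' : zbasis I e -> zbasis I e' ->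
  \det (embmx e) != 0 -> `|\det (embmx e')| = `|\det (embmx e)|.
Proof.
move=> basis_e basis_e' det_e_neq0.
have [z e'E] := det_embmx_zspan basis_e (fun k => zbasis_mem k basis_e').
have [w eE] := det_embmx_zspan basis_e' (fun k => zbasis_mem k basis_e).
have zw1 : z * w = 1.
  apply: (@intr_inj algC); apply: (mulfI det_e_neq0).
  by rewrite intrM mulrA -e'E -eE mulr1.
have /eqP : (`|z| * `|w|)%N = 1%N by rewrite -abszM zw1.
rewrite muln_eq1 => /andP[/eqP z1 _].
by rewrite e'E normrM -intr_norm -abszE z1 mulr1.
Qed.

Lemma positive_basis_det_neq0 e : positive_basis sigma e -> \det (embmx e) != 0.
Proof. by apply: contraTneq => ->; rewrite mulr0 ltxx. Qed.

Lemma ideal_norm_embmx (I : K -> Prop) BK BI (v : rat) :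
  zbasis (@OK K) BK -> positive_basis sigma BK ->
  zbasis I BI -> positive_basis sigma BI ->
  ideal_norm_is n I v -> ratr v = \det (embmx BI) / \det (embmx BK).
Proof.
move=> basisK posK basisI posI [eK [eI [basis_eK [basis_eI ->]]]].
have detK_neq0 := positive_basis_det_neq0 posK.
have normK := normr_det_embmx_zbasis basisK basis_eK detK_neq0.
have normI := normr_det_embmx_zbasis basisI basis_eI (positive_basis_det_neq0 posI).
have eK_neq0 : \det (embmx eK) != 0 by rewrite -normr_eq0 normK normr_eq0.
rewrite ratr_norm; have -> : ratr (detB eK eI) = \det (embmx eI) / \det (embmx eK).
  by rewrite (det_embmx_detB eI basis_eK.1) [_ * ratr _]mulrC mulfK.
by rewrite normf_div normK normI -normf_div gtr0_norm // divr_gt0_mulCi.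
Qed.

End Embeddings.

Section ExtendedDeterminant.
Variables (K : fieldExtType rat) (r : nat).
Implicit Types (B : 'I_r.+2 -> K) (a : 'I_r.+1 -> K).

Local Notation tup a := [tuple a i | i < r.+1].

Definition extend a (x : K) : 'I_r.+2 -> K :=
  fun j => if (j < r.+1)%N then a (inord j) else x.

Definition extdet B a (x : K) : rat := detB B (extend a x).

Lemma dualformE B u h lam x : dualform B u h lam x = extdet B (fun i => u i * h) x / lam.
Proof. by []. Qed.

Fact extdet_is_scalar B a : scalar (extdet B a).
Proof.
move=> k x y; rewrite -[extdet B a y]mul1r.
apply: (determinant_multilinear (i0 := ord_max)).
- by apply/rowP => l; rewrite !mxE /extend /= ltnn linearP mul1r.
- by apply/matrixP => i l; rewrite !mxE /extend lift_max /= ltn_ord.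
- by apply/matrixP => i l; rewrite !mxE /extend lift_max /= ltn_ord.
Qed.

HB.instance Definition _ B a := GRing.isSemilinear.Build rat K rat _ (extdet B a)
  (GRing.semilinear_linear (extdet_is_scalar B a)).

Lemma eq_extdet B a a' : a =1 a' -> extdet B a =1 extdet B a'.
Proof.
by move=> eq_a x; congr (\det _); apply/matrixP => i j; rewrite !mxE /extend eq_a.
Qed.

Lemma extdet_fam B a k : extdet B a (a k) = 0.
Proof.
apply: (determinant_alternate (i1 := widen_ord (leqnSn _) k) (i2 := ord_max)).
  by rewrite neq_ltn /= ltn_ord.
by move=> l; rewrite !mxE /extend /= ltn_ord ltnn inord_val.
Qed.

Lemma extdet_span B a x : x \in <<tup a>>%VS -> extdet B a x = 0.
Proof.
move/coord_span ->; rewrite linear_sum big1 // => i _.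
by rewrite linearZ /= nth_mktuple extdet_fam mulr0.
Qed.

Hypothesis dimK : \dim {:K} = r.+2.
Variables (B : 'I_r.+2 -> K) (a : 'I_r.+1 -> K).
Hypotheses (free_B : qfree B) (free_a : qfree a).

Lemma qfree_extend x : x \notin <<tup a>>%VS -> qfree (extend a x).
Proof.
move=> x_out c; rewrite big_ord_recr /= {2}/extend ltnn.
under eq_bigr do rewrite /extend /= ltn_ord inord_val.
have [c_max0|c_max_neq0] := eqVneq (c ord_max) 0; last first.
  move/eqP; rewrite addrC addr_eq0 => /eqP xE; case/negP: x_out.
  rewrite -[x](scalerK c_max_neq0) xE memvZ // memvN // memv_suml // => i _.
  by rewrite memvZ // memv_span // -tnth_mktuple mem_tnth.
rewrite c_max0 scale0r addr0 => /free_a c0 i.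
have [i_lt | i_ge] := ltnP i r.+1.
  by rewrite -(c0 (Ordinal i_lt)); congr c; apply: val_inj.
by rewrite -c_max0; congr c; apply/val_inj/eqP; rewrite eqn_leq i_ge -ltnS ltn_ord.
Qed.

Lemma extdet_eq0 x : (extdet B a x == 0) = (x \in <<tup a>>%VS).
Proof.
apply/idP/idP => [|/extdet_span -> //]; apply: contraLR => x_out.
exact: (detB_neq0 dimK free_B (qfree_extend x_out)).
Qed.

Lemma extdet_neq0_exists : exists w, extdet B a w != 0.
Proof.
have : ~~ (fullv <= <<tup a>>)%VS.
  apply/negP => /dimvS; rewrite dimK => le_dim.
  by have := leq_trans le_dim (dim_span _); rewrite size_tuple ltnn.
by case/subvPn => w _ w_out; exists w; rewrite extdet_eq0.
Qed.

(* An x stabilising the hyperplane ker (extdet B a) = span a acts on the line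
   K / span a as some scalar c; if x - c were invertible it would map K into span a. *)
Lemma extdet_mul_stable x : (forall k, extdet B a (x * a k) = 0) -> exists c : rat, x = c%:A.
Proof.
move=> xa0.
have x_stable z : extdet B a z = 0 -> extdet B a (x * z) = 0.
  move/eqP; rewrite extdet_eq0 => /coord_span ->.
  rewrite mulr_sumr linear_sum big1 // => i _.
  by rewrite -scalerAr linearZ /= nth_mktuple xa0 mulr0.
have [w w_neq0] := extdet_neq0_exists.
pose c := extdet B a (x * w) / extdet B a w.
have x_scalar z : extdet B a (x * z) = c * extdet B a z.
  pose s := extdet B a z / extdet B a w.
  have /x_stable : extdet B a (z - s *: w) = 0 by rewrite linearB linearZ /= divfK // subrr.
  rewrite mulrBr -scalerAr linearB linearZ /= => /eqP; rewrite subr_eq0 => /eqP ->.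
  by rewrite /s /c; field.
exists c; apply/eqP; rewrite -subr_eq0; apply/negPn/negP => xc_neq0.
have := x_scalar ((x - c%:A)^-1 * w); set y := _ * w.
have -> : x * y = w + c *: y.
  by rewrite -[x in x * y](subrK c%:A) mulrDl mulrA divff // mul1r mulr_algl.
by rewrite linearD linearZ /= => /eqP; rewrite -subr_eq0 addrK (negbTE w_neq0).
Qed.

End ExtendedDeterminant.

Section SmithForm.
Variables (n : nat) (M : 'M[rat]_n.+1) (A : 'I_n.+1 -> int).
Hypothesis smithA : smith_divisors M A.

Local Notation intmx Z := (map_mx (fun z : int => (z%:~R : rat)) Z).

Lemma smith_last_neq0 : \det M != 0 -> A ord_max != 0.
Proof.
case: smithA => _ [_ [_ [P [Q [P_unit [Q_unit PMQ]]]]]] detM_neq0.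
have det_intmx_neq0 X : X \in unitmx -> \det (intmx X) != 0.
  by rewrite unitmxE det_map_mx intr_eq0; apply: contraTneq => ->; rewrite unitr0.
have := congr1 determinant PMQ; rewrite !det_mulmx det_diag (bigD1 ord_max) //= mxE.
move=> detE; apply/eqP => Amax0; move: detE; rewrite Amax0 mul0r; apply/eqP.
rewrite !mulf_eq0 (negbTE detM_neq0) (negbTE (det_intmx_neq0 _ _ P_unit)).
by rewrite (negbTE (det_intmx_neq0 _ _ Q_unit)).
Qed.

Lemma smith_last_dvd (Z : 'M[int]_n.+1) (c : rat) :
  M *m intmx Z = c%:M -> exists l : int, c = (A ord_max * l)%:~R.
Proof.
case: smithA => _ [_ [_ [P [Q [P_unit [Q_unit PMQ]]]]]] MZ.
have intmxK X : X \in unitmx -> intmx X *m intmx (invmx X) = 1%:M.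
  by move=> X_unit; rewrite -map_mxM mulmxV // map_mx1.
pose W := invmx Q *m Z *m invmx P.
have DW : diag_mx (\row_i ((A i)%:~R : rat)) *m intmx W = c%:M.
  rewrite -PMQ !map_mxM !mulmxA -[_ *m intmx Q *m _]mulmxA intmxK // mulmx1.
  by rewrite -[_ *m M *m _]mulmxA MZ mul_mx_scalar -scalemxAl intmxK // scalemx1.
exists (W ord_max ord_max); have := congr1 (fun X : 'M[rat]_n.+1 => X ord_max ord_max) DW.
by rewrite mul_diag_mx !mxE eqxx mulr1n intrM.
Qed.

End SmithForm.

Lemma sign_normalize (q : rat) : q != 0 ->
  exists2 eps : int, eps = 1 \/ eps = -1 & 0 < eps%:~R * q.
Proof.
move=> q_neq0; exists (if 0 < q then 1 else -1); first by case: ifP; [left | right].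
have [q_gt0 | q_le0] := ltrP 0 q; first by rewrite mul1r.
by rewrite mulN1r oppr_gt0 lt_neqAle q_neq0.
Qed.

Section DualForms.
Variables (K : fieldExtType rat) (r : nat).
Hypothesis dimK : \dim {:K} = r.+2.
Implicit Types (B : 'I_r.+2 -> K) (u : 'I_r.+1 -> K).

Definition dualforms B u (h : K) (lam : rat) (k : 'I_r.+1) (x : K) : rat :=
  dualform B u h lam (u k * x).

Lemma det_coefmx_dualforms_neq0 B u (lam : rat) :
  qfree B -> qfree u -> B ord0 = 1 -> lam != 0 ->
  \det (coefmx (dualforms B u 1 lam) B) != 0.
Proof.
move=> free_B free_u B0 lam_neq0; apply/negP; rewrite -det_tr => /det0P[y y_neq0 yM0].
pose x := \sum_i y 0 i *: B (lift ord0 i).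
have xu0 k : extdet B u (x * u k) = 0.
  rewrite mulrC -(eq_extdet _ (fun i => mulr1 (u i))).
  transitivity (lam * (y *m (coefmx (dualforms B u 1 lam) B)^T) 0 k).
    rewrite mxE mulr_sumr mulr_sumr linear_sum; apply: eq_bigr => i _.
    by rewrite !mxE -scalerAr linearZ /= /dualforms dualformE; field.
  by rewrite yM0 mxE mulr0.
have [c xE] := extdet_mul_stable dimK free_B free_u xu0.
case/eqP: y_neq0; apply/rowP => i; rewrite mxE.
have := free_B (fun l => if unlift ord0 l is Some i then y 0 i else - c).
rewrite big_ord_recl unlift_none; under eq_bigr do rewrite liftK.
rewrite -/x xE B0 scaleNr addrC subrr => /(_ erefl (lift ord0 i)).
by rewrite liftK.
Qed.

Lemma det_embmx_extdet_mulr (sigma : 'I_r.+2 -> {rmorphism K -> algC}) B B'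
    (a : 'I_r.+1 -> K) (h y : K) :
  qfree B -> qfree B' ->
  \det (embmx sigma B) * ratr (extdet B (fun i => a i * h) (y * h))
    = elt_norm sigma h * \det (embmx sigma B') * ratr (extdet B' a y).
Proof.
move=> free_B free_B'; rewrite -mulrA -!det_embmx_detB // -det_embmx_mull.
by congr (\det _); apply/matrixP => i j; rewrite !mxE /extend; case: ifP; rewrite mulrC.
Qed.

Lemma ratr_dualforms_mulr (sigma : 'I_r.+2 -> {rmorphism K -> algC}) BL BK u
    (h : K) (lam lamt : rat) k x :
  qfree BL -> qfree BK -> \det (embmx sigma BL) != 0 -> lam != 0 -> lamt != 0 ->
  ratr (dualforms BL u h lam k (x * h))
    = elt_norm sigma h * (\det (embmx sigma BK) / \det (embmx sigma BL))
      * ratr (lamt / lam) * ratr (dualforms BK u 1 lamt k x).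
Proof.
move=> free_BL free_BK detL_neq0 lam_neq0 lamt_neq0.
rewrite /dualforms !dualformE (eq_extdet _ (fun i => mulr1 (u i))) mulrA !fmorph_div /=.
have := det_embmx_extdet_mulr sigma u h (u k * x) free_BL free_BK.
move/(canRL (mulKf detL_neq0)) ->.
by field; rewrite !fmorph_eq0 lam_neq0 lamt_neq0.
Qed.

Lemma dualforms_mulr_dual (sigma : 'I_r.+2 -> {rmorphism K -> algC}) BL BK u
    (h : K) (lam lamt : rat) (al : 'I_r.+1 -> K) (d : rat) :
  qfree BL -> qfree BK -> \det (embmx sigma BL) != 0 -> lam != 0 -> lamt != 0 ->
  (forall j k, dualforms BK u 1 lamt k (al j) = if k == j then d else 0) ->
  exists2 s : rat,
    ratr s = elt_norm sigma h * (\det (embmx sigma BK) / \det (embmx sigma BL))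
             * ratr (lamt / lam) * ratr d
    & forall j k, dualforms BL u h lam k (al j * h) = if k == j then s else 0.
Proof.
move=> free_BL free_BK detL_neq0 lam_neq0 lamt_neq0 dual_al.
have ratrE k x := @ratr_dualforms_mulr sigma BL BK u h lam lamt k x.
exists (dualforms BL u h lam ord0 (al ord0 * h)) => [|j k].
  by rewrite ratrE // dual_al eqxx.
apply: (@fmorph_inj _ algC ratr) => /=; rewrite ratrE // dual_al.
by case: eqP => _; rewrite ?ratrE ?dual_al ?eqxx ?rmorph0 ?mulr0.
Qed.

Lemma dualforms_mulrz B u h lam k x (z : int) :
  dualforms B u h lam k (x *~ z) = dualforms B u h lam k x *~ z.
Proof. by rewrite /dualforms !dualformE mulrzAr raddfMz mulrzAl. Qed.

Lemma dualforms_dual_sign B u h lam (al : 'I_r.+1 -> K) (s : rat) : s != 0 ->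
  (forall j k, dualforms B u h lam k (al j) = if k == j then s else 0) ->
  exists eps : int, [/\ eps = 1 \/ eps = -1, 0 < eps%:~R * s &
    forall j k, dualforms B u h lam k (al j *~ eps) = if k == j then eps%:~R * s else 0].
Proof.
move=> s_neq0 dual_al; have [eps eps_sign es_gt0] := sign_normalize s_neq0.
exists eps; split=> // j k; rewrite dualforms_mulrz dual_al.
by case: eqP; rewrite ?mul0rz // -mulrzl mulrC.
Qed.

Lemma dual_family_smith_dvd (I : K -> Prop) B u (h : K) (lam : rat) (A : 'I_r.+1 -> int)
    (al : 'I_r.+1 -> K) (c : rat) :
  zbasis I B -> B ord0 = h -> smith_divisors (coefmx (dualforms B u h lam) B) A ->
  (forall j, I (al j)) -> 0 < c ->
  (forall j k, dualforms B u h lam k (al j) = if k == j then c else 0) ->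
  exists2 l : int, 0 < l & c = (A ord_max * l)%:~R.
Proof.
move=> [_ spanI] B0 smithA Ial c_gt0 dual_al.
have /fin_all_exists[Z alE] : forall j, exists z : 'I_r.+2 -> int, al j = \sum_i B i *~ z i.
  by move=> j; apply/spanI/Ial.
have [|l cE] := @smith_last_dvd _ _ _ smithA (\matrix_(i, j) Z j (lift ord0 i)) c.
  apply/matrixP => k j.
  have -> : c%:M k j = dualforms B u h lam k (al j) by rewrite dual_al mxE; case: eqP.
  rewrite alE /dualforms dualformE mulr_sumr linear_sum big_ord_recl mulrzAr raddfMz /=.
  rewrite B0 extdet_fam mul0rz add0r mulr_suml mxE; apply: eq_bigr => i _.
  by rewrite !mxE mulrzr [in RHS]mulrzAr raddfMz /= dualformE mulrzAl.
exists l => //; rewrite ltNge; apply: contraTN c_gt0 => l_le0.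
by rewrite cE -leNgt lerz0 mulr_ge0_le0 // smithA.2.1.
Qed.

End DualForms.

Lemma dual_family_pos_uniform (K : fieldExtType rat) n (F : 'I_n -> K -> rat)
    (I : K -> Prop) (al : 'I_n -> K) (c : rat) :
  (forall j, I (al j)) -> 0 < c -> (forall j k, F k (al j) = if k == j then c else 0) ->
  pos_dual_family F I al /\ uniform_family F al.
Proof.
move=> Ial c_gt0 dual_al; split; last by move=> j k; rewrite !dual_al !eqxx.
by split=> //; split=> [j | j k /negbTE kj]; rewrite dual_al ?eqxx ?kj.
Qed.

Unset Implicit Arguments.

Theorem lemma13
  (K : fieldExtType rat) (r : nat) (hdim : \dim {:K} = r.+2)
  (* ordered embeddings: sigma_0..sigma_(r-1) real, sigma_r complex, sigma_(r+1) = conj sigma_r *)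
  (sigma : 'I_r.+2 -> {rmorphism K -> algC})
  (hsig_inj : forall i j, (forall x, sigma i x = sigma j x) -> i = j)
  (hsig_real : forall i : 'I_r.+2, (i < r)%N -> forall x, sigma i x \is Num.real)
  (hsig_cplx : exists x, sigma (inord r) x \isn't Num.real)
  (hsig_conj : forall x, sigma ord_max x = (sigma (inord r) x)^*)
  (* the ideals f, b, L = f b^-1, a *)
  (f b a L : K -> Prop) (q N m : nat) (h h' : K)
  (hf : int_ideal f) (hfne : exists x, OK x /\ ~ f x)
  (hq : (0 < q)%N /\ forall z : int, f (z%:~R) <-> (q%:Z %| z)%Z)
  (hb : int_ideal b) (hfb : ideal_coprime f b)
  (hL : forall x, L x <-> idealMul f (idealInv b) x)
  (ha : int_ideal a) (hafb : ideal_coprime a (idealMul f b))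
  (hN : @ideal_norm_is K r.+2 a N%:R)
  (hcyc : exists g, quot_generated_by (idealMul (idealInv a) L) L g)
  (* h admissible, h = m h' with h' primitive *)
  (hhL : L h) (hhq : L (h / q%:R - 1))
  (hhN : quot_generated_by (idealMul (idealInv a) L) L (h / N%:R))
  (hm : (0 < m)%N) (hhm : h = h' *+ m)
  (hprim : L h' /\ forall (k : nat) y, (1 < k)%N -> L y -> h' != y *+ k)
  (* units u_0 = 1, u_1, ..., u_r *)
  (u : 'I_r.+1 -> K) (hu0 : u ord0 = 1)
  (hu : forall j, j != ord0 ->
     [/\ OKunit (u j), (forall i : 'I_r.+2, (i < r)%N -> 0 < sigma i (u j)) & f (u j - 1)])
  (hufund : forall k : 'I_r.+1 -> int,
     \prod_(j < r.+1 | j != ord0) u j ^ k j = 1 -> forall j, j != ord0 -> k j = 0)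
  (hufree : qfree u)
  (* positive Z-basis B_L of L *)
  (BL : 'I_r.+2 -> K) (hBL : zbasis L BL) (hBLpos : positive_basis sigma BL)
  (hBL0 : BL ord0 = h')
  (c : 'I_r.+1 -> 'I_r.+2 -> int)
  (hc : forall j : 'I_r.+1, u j * h' = \sum_(k < r.+2 | (k <= j)%N) BL k *~ c j k)
  (hcpos : forall j : 'I_r.+1, 0 < c j (widen_ord (leqnSn _) j))
  (A : 'I_r.+1 -> int)
  (* positive Z-basis B_K of O_K *)
  (BK : 'I_r.+2 -> K) (hBK : zbasis (@OK K) BK) (hBKpos : positive_basis sigma BK)
  (hBK0 : BK ord0 = 1)
  (ct : 'I_r.+1 -> 'I_r.+2 -> int)
  (hct : forall j : 'I_r.+1, u j = \sum_(k < r.+2 | (k <= j)%N) BK k *~ ct j k)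
  (hctpos : forall j : 'I_r.+1, 0 < ct j (widen_ord (leqnSn _) j))
  (At : 'I_r.+1 -> int)
  (alt : 'I_r.+1 -> K)
  (NL : rat) (hNL : @ideal_norm_is K r.+2 L NL) :
  let lam : int := \prod_(j < r.+1 | j != ord0) c j (widen_ord (leqnSn _) j) in
  let aU : 'I_r.+1 -> K -> rat := fun j x => dualform BL u h' lam%:~R (u j * x) in
  let t : int := A ord_max in
  let lamt : int := \prod_(j < r.+1 | j != ord0) ct j (widen_ord (leqnSn _) j) in
  let atU : 'I_r.+1 -> K -> rat := fun j x => dualform BK u 1 lamt%:~R (u j * x) in
  let tt : int := At ord_max in
  smith_divisors (coefmx aU BL) A ->
  smith_divisors (coefmx atU BK) At ->
  (forall j, OK (alt j)) ->
  (forall j k, atU k (alt j) = if k == j then tt%:~R else 0) ->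
  exists eps : int, (eps = 1 \/ eps = -1) /\
    let al : 'I_r.+1 -> K := fun j => (alt j * h') *~ eps in
    [/\ pos_dual_family aU L al, uniform_family aU al &
     exists l : int, 0 < l /\
       (forall j k, aU k (al j) = if k == j then (l * t)%:~R else 0) /\
       ((eps * lam * l * t)%:~R : algC)
         = elt_norm sigma h' / ratr NL * lamt%:~R * tt%:~R].
Proof.
move=> lam aU t lamt atU tt smithA smithAt OKalt dual_alt.
have [free_BL free_BK] := (hBL.1, hBK.1).
have lam_gt0 : 0 < lam by apply: prodr_gt0.
have lam_neq0 : (lam%:~R : rat) != 0 by rewrite intr_eq0 gt_eqF.
have lamt_neq0 : (lamt%:~R : rat) != 0 by rewrite intr_eq0 gt_eqF // prodr_gt0.
have detL_neq0 := positive_basis_det_neq0 hBLpos.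
have detK_neq0 := positive_basis_det_neq0 hBKpos.
have [s sE dual_h'] :=
  dualforms_mulr_dual hdim h' free_BL free_BK detL_neq0 lam_neq0 lamt_neq0 dual_alt.
have tt_neq0 : tt != 0.
  exact: smith_last_neq0 smithAt (det_coefmx_dualforms_neq0 hdim free_BK hufree hBK0 lamt_neq0).
have s_neq0 : s != 0.
  rewrite -(fmorph_eq0 (@ratr algC)) /= sE ratr_int mulf_neq0 ?intr_eq0 //.
  by rewrite mulf_neq0 ?fmorph_eq0 ?mulf_neq0 ?invr_neq0 ?elt_norm_neq0 // -hBL0 qfree_neq0.
have [eps [eps_sign n_gt0 dual_al]] := dualforms_dual_sign s_neq0 dual_h'.
have L_al j : L ((alt j * h') *~ eps).
  apply: (zbasis_mulrz _ hBL); apply/hL; apply: idealMul_mull (OKalt j) _.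
    exact: hf.1.1.
  exact/hL/hprim.1.
have [l l_gt0 nE] := dual_family_smith_dvd hBL hBL0 smithA L_al n_gt0 dual_al.
have [pos_al unif_al] := dual_family_pos_uniform L_al n_gt0 dual_al.
exists eps; split=> //; split=> //; exists l; split=> //.
split=> [j k|]; first by rewrite [l * _]mulrC -nE; exact: dual_al.
have ltE : (l * t)%:~R = eps%:~R * ratr s :> algC.
  by rewrite mulrC -[LHS]ratr_int -nE rmorphM /= ratr_int.
rewrite -mulrA intrM ltE sE ratr_int.
rewrite (ideal_norm_embmx hdim hBK hBKpos hBL hBLpos hNL) fmorph_div /= !ratr_int.
by case: eps_sign => ->; field; rewrite detK_neq0 detL_neq0 intr_eq0 gt_eqF.
Qed.
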